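(* Let $R$ be an integral domain, $n$ a positive integer, and $I$ an ideal of $R$. Then $\langle I,X\rangle$ is a weakly $n$-absorbing ideal of the polynomial ring $R[X]$ if and only if $I$ is a weakly $n$-absorbing ideal of $R$.
   Context: All rings are commutative with $1\neq0$. A proper ideal $I$ of a ring $R$ is weakly $n$-absorbing if whenever $0\neq a_1\cdots a_{n+1}\in I$ with $a_1,\dots,a_{n+1}\in R$, there are $n$ of the $a_i$'s whose product is in $I$. $\langle I,X\rangle$ denotes the ideal of $R[X]$ generated by $I$ and $X$. *)

From HB Require Import structures.
From mathcomp Require Import all_boot all_order all_algebra.
Set Implicit Arguments. Unset Strict Implicit. Unset Printing Implicit Defensive.
Import GRing.Theory.
Local Open Scope ring_scope.

Definition is_ideal (R : comNzRingType) (I : R -> Prop) : Prop :=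
  [/\ I 0,
      (forall x y, I x -> I y -> I (x + y)) &
      (forall a x, I x -> I (a * x))].

Definition proper_ideal (R : comNzRingType) (I : R -> Prop) : Prop :=
  is_ideal I /\ ~ I 1.

Definition weakly_n_absorbing (R : comNzRingType) (n : nat) (I : R -> Prop) : Prop :=
  proper_ideal I /\
  forall a : 'I_n.+1 -> R,
    \prod_(i < n.+1) a i != 0 -> I (\prod_(i < n.+1) a i) ->
    exists j : 'I_n.+1, I (\prod_(i < n.+1 | i != j) a i).

Definition ideal_gen (R : comNzRingType) (S : R -> Prop) : R -> Prop :=
  fun x => exists s : seq (R * R),
    (forall p, p \in s -> S p.2) /\ x = \sum_(p <- s) p.1 * p.2.

Definition ideal_IX (R : comNzRingType) (I : R -> Prop) : {poly R} -> Prop :=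
  ideal_gen (fun f : {poly R} => (exists c, I c /\ f = c%:P) \/ f = 'X).

From Pilot Require Import Defs.
From mathcomp Require Import all_boot all_order all_algebra.
Set Implicit Arguments. Unset Strict Implicit. Unset Printing Implicit Defensive.
Local Open Scope ring_scope.
Import GRing.Theory.

(* <I, X> is the preimage of I under evaluation at 0, a ring morphism
   R[X] -> R split by the constant embedding. Weak n-absorption descends
   along the section, whose injectivity keeps nonzero products nonzero. It
   lifts to the preimage: if the image of a nonzero product is nonzero, use
   the hypothesis on I; otherwise, R being a domain, some factor has image 0,
   and since n > 0 it can be kept among n of the factors, whose product then
   maps to 0, which lies in I. *)

Lemma weakly_n_absorbing_ext (R : comNzRingType) (n : nat) (I J : R -> Prop) :
  (forall x, I x <-> J x) -> weakly_n_absorbing n I -> weakly_n_absorbing n J.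
Proof.
move=> IJ [[[I0 ID IM] I1] Iabs]; split; first split.
- split=> [|x y /IJ Ix /IJ Iy|a x /IJ Ix]; apply/IJ; first exact: I0.
    exact: ID.
  exact: IM.
- by move/IJ.
by move=> a a_neq0 /IJ /(Iabs a a_neq0) [j /IJ Jj]; exists j.
Qed.

Lemma prod_eq0_dropn (R : idomainType) (n : nat) (a : 'I_n.+1 -> R) :
  (0 < n)%N -> \prod_(i < n.+1) a i = 0 ->
  exists j : 'I_n.+1, \prod_(i < n.+1 | i != j) a i = 0.
Proof.
move=> n_gt0 /eqP /prodf_eq0 [j _ /eqP aj0].
have [k kj] : exists k : 'I_n.+1, k != j.
  case: (eqVneq j ord0) => [->|j_neq0]; last by exists ord0; rewrite eq_sym.
  by exists ord_max; rewrite -(inj_eq val_inj) /= -lt0n.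
by exists k; rewrite (bigD1 j) 1?eq_sym //= aj0 mul0r.
Qed.

Section Preimage.
Variables (A B : comNzRingType) (phi : {rmorphism A -> B}).
Variable J : B -> Prop.

Lemma is_ideal_preim : is_ideal J -> is_ideal (fun x => J (phi x)).
Proof.
case=> J0 JD JM; split=> [|x y Jx Jy|a x Jx]; first by rewrite rmorph0.
  by rewrite rmorphD; apply: JD.
by rewrite rmorphM; apply: JM.
Qed.

Lemma proper_ideal_preim :
  Defs.proper_ideal J -> Defs.proper_ideal (fun x => J (phi x)).
Proof. by case=> /is_ideal_preim J_ideal J1; split; rewrite // rmorph1. Qed.

Lemma weakly_n_absorbing_of_preim (sigma : {rmorphism B -> A}) (n : nat) :
  cancel sigma phi ->
  weakly_n_absorbing n (fun x => J (phi x)) -> weakly_n_absorbing n J.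
Proof.
move=> sigmaK [[[J0 JD JM] J1] Jabs]; split; first split.
- split=> [|x y Jx Jy|a x Jx]; first by rewrite -(rmorph0 phi).
    by rewrite -[x + y]sigmaK rmorphD; apply: JD; rewrite !sigmaK.
  by rewrite -[a * x]sigmaK rmorphM; apply: JM; rewrite sigmaK.
- by rewrite -(rmorph1 phi).
move=> a a_neq0 Ja.
have sa_neq0 : \prod_(i < n.+1) sigma (a i) != 0 
  by rewrite -rmorph_prod (raddf_eq0 _ (can_inj sigmaK)).
have sJa : J (phi (\prod_(i < n.+1) sigma (a i))) by rewrite -rmorph_prod sigmaK.
have [j] := Jabs _ sa_neq0 sJa.
by rewrite -rmorph_prod sigmaK; exists j.
Qed.

End Preimage.

Lemma weakly_n_absorbing_preim (A : comNzRingType) (B : idomainType)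
    (phi : {rmorphism A -> B}) (J : B -> Prop) (n : nat) :
  (0 < n)%N -> weakly_n_absorbing n J -> weakly_n_absorbing n (fun x => J (phi x)).
Proof.
move=> n_gt0 [J_proper Jabs]; split; first exact: proper_ideal_preim.
move=> a a_neq0; rewrite rmorph_prod => Ja.
have [[J0 _ _] _] := J_proper.
have [pa0|pa_neq0] := eqVneq (\prod_(i < n.+1) phi (a i)) 0.
  have [j pj0] := prod_eq0_dropn n_gt0 pa0.
  by exists j; rewrite rmorph_prod pj0.
have [j Jj] := Jabs _ pa_neq0 Ja.
by exists j; rewrite rmorph_prod.
Qed.

Lemma ideal_IXP (R : comNzRingType) (I : R -> Prop) (f : {poly R}) :
  is_ideal I -> ideal_IX I f <-> I f.[0].
Proof.
case=> I0 ID IM; split.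
  case=> s [sIX ->]; rewrite horner_sum.
  elim: s sIX => [|p s IHs] sIX; first by rewrite big_nil.
  rewrite big_cons; apply: ID; last by apply: IHs => q qs; apply: sIX; rewrite inE qs orbT.
  rewrite hornerM; apply: IM.
  have := sIX p; rewrite inE eqxx => /(_ isT) [[c [Ic ->]]|->].
    by rewrite hornerC.
  by rewrite hornerX.
move=> If0.
have [q f_eq] : exists q, f = q * 'X + f.[0]%:P.
  have /factor_theorem [q Hq] : root (f - f.[0]%:P) 0 by rewrite rootE !hornerE subrr.
  by exists q; rewrite -(subr0 'X) -Hq subrK.
exists [:: (1, f.[0]%:P); (q, 'X)]; split.
  by move=> p; rewrite !inE => /orP [/eqP ->|/eqP ->]; [left; exists f.[0] | right].
by rewrite !big_cons big_nil addr0 mul1r addrC -f_eq.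
Qed.

Theorem mainTheorem3 (R : idomainType) (n : nat) (I : R -> Prop) :
  (0 < n)%N -> is_ideal I ->
  (weakly_n_absorbing n (ideal_IX I) <-> weakly_n_absorbing n I).
Proof.
move=> n_gt0 I_ideal.
have IX_preim f : I (horner_eval 0 f) <-> ideal_IX I f.
  exact: iff_sym (ideal_IXP f I_ideal).
split=> [IX_abs|I_abs].
  apply: (weakly_n_absorbing_of_preim (phi := horner_eval 0) (sigma := polyC)).
    by move=> c; apply: (hornerC c 0).
  by apply: weakly_n_absorbing_ext IX_abs => f; exact: iff_sym (IX_preim f).
apply: weakly_n_absorbing_ext (weakly_n_absorbing_preim _ n_gt0 I_abs).
exact: IX_preim.
Qed.
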